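(* Let $\mu$ be a probability measure on $\mathrm{Homeo}_+(\mathbb{R})$ with finite or countable support having the shiftability property. If $\phi_+(x)>0$ for some $x\in\mathbb{R}$, then $\phi_+(y)>0$ for every $y\in\mathbb{R}$. Similarly, if $\phi_-(x)>0$ for some $x$, then $\phi_-(y)>0$ for every $y$.
   Context: Setup. Let $\mu$ be a probability measure on the group $\mathrm{Homeo}_+(\mathbb{R})$ of orientation-preserving homeomorphisms of $\mathbb{R}$, supported on a finite or countable set $\{f_1,f_2,\dots\}$ with $p_i=\mu(\{f_i\})>0$, $\sum_i p_i=1$. Let $g_1,g_2,\dots$ be i.i.d. random maps with law $\mu$, and set $F_0=\mathrm{id}$, $F_n=g_n\circ\cdots\circ g_1$. For $x\in\mathbb{R}$ let $\phi_+(x)=\mathbb{P}(\lim_n F_n(x)=+\infty)$ and $\phi_-(x)=\mathbb{P}(\lim_n F_n(x)=-\infty)$. The system has the shiftability property if for every $x\in\mathbb{R}$ there exist $f,g$ with $\mu(\{f\})>0$, $\mu(\{g\})>0$ and $g(x)<x<f(x)$. *)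

From HB Require Import structures.
From mathcomp Require Import all_boot all_order all_algebra.
From mathcomp Require Import all_classical all_reals all_analysis.
Set Implicit Arguments. Unset Strict Implicit. Unset Printing Implicit Defensive.
Import Order.TTheory GRing.Theory Num.Theory numFieldNormedType.Exports.
Local Open Scope classical_set_scope.
Local Open Scope ring_scope.

Definition homeo_plus (R : realType) (h : R -> R) : Prop :=
  continuous h /\ (forall x y : R, x < y -> h x < h y) /\
  (forall y : R, exists x, h x = y).

Definition iid_seq d (T : measurableType d) (R : realType)
  (P : probability T R) (xi : nat -> T -> nat) : Prop :=
  (forall n k, measurable (xi n @^-1` [set k])) /\
  (forall (n : nat) (k : nat -> nat),
     P (\bigcap_(i in `I_n) (xi i @^-1` [set k i])) =
     (\prod_(i < n) P (xi 0%N @^-1` [set k i]))%E).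

(* F_n = g_n o ... o g_1 where g_(i+1) = f (xi i);  F_0 = id. *)
Fixpoint Fwalk (R : realType) (T : Type) (f : nat -> R -> R)
  (xi : nat -> T -> nat) (n : nat) (w : T) (x : R) : R :=
  match n with
  | 0%N => x
  | m.+1 => f (xi m w) (Fwalk f xi m w x)
  end.

Definition phi_plus d (T : measurableType d) (R : realType)
  (P : probability T R) (f : nat -> R -> R) (xi : nat -> T -> nat) (x : R)
  : \bar R :=
  P [set w | (fun n => Fwalk f xi n w x) @ \oo --> +oo].

Definition phi_minus d (T : measurableType d) (R : realType)
  (P : probability T R) (f : nat -> R -> R) (xi : nat -> T -> nat) (x : R)
  : \bar R :=
  P [set w | (fun n => Fwalk f xi n w x) @ \oo --> -oo].

(* mu({h}) for the law mu of the random map g_1 = f (xi 0). *)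
Definition mu_atom d (T : measurableType d) (R : realType)
  (P : probability T R) (f : nat -> R -> R) (xi : nat -> T -> nat)
  (h : R -> R) : \bar R :=
  P [set w | f (xi 0%N w) = h].

Definition shiftable d (T : measurableType d) (R : realType)
  (P : probability T R) (f : nat -> R -> R) (xi : nat -> T -> nat) : Prop :=
  forall x : R, exists h g : R -> R,
    (0 < mu_atom P f xi h)%E /\ (0 < mu_atom P f xi g)%E /\ g x < x < h x.

From HB Require Import structures.
From mathcomp Require Import all_boot all_order all_algebra.
From mathcomp Require Import all_classical all_reals all_analysis.
Import Order.TTheory GRing.Theory Num.Theory numFieldNormedType.Exports.
Local Open Scope classical_set_scope.
Local Open Scope ring_scope.

(* The argument: by shiftability every point z is pushed up by some map f_j
   with P(xi = j) > 0.  Since the maps are increasing bijections, this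
   forces the points reachable from y by finitely many such steps to be
   unbounded above (a supremum would be pushed beyond itself); so some
   fixed finite index word k of positive probability takes y to a point
   z >= x.  Escaping from z after the word is independent of the word and
   has the same law as escaping from z, which by monotonicity is at least
   phi_+(x) > 0.  Hence phi_+(y) >= P(word) * phi_+(x) > 0. *)

Section Walk.
Context {R : realType}.
Variable f : nat -> R -> R.

Fixpoint walk (s : nat -> nat) (n : nat) (z : R) : R :=
  if n is m.+1 then f (s m) (walk s m z) else z.

Lemma Fwalk_walk (T : Type) (xi : nat -> T -> nat) n w z :
  Fwalk f xi n w z = walk (fun i => xi i w) n z.
Proof. by elim: n => //= n ->. Qed.

Lemma walk_ext s s' n z :
  (forall i, (i < n)%N -> s i = s' i) -> walk s n z = walk s' n z.
Proof.
elim: n => [//|n IH] eq_ss' /=.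
by rewrite eq_ss' // IH // => i lt_in; apply: eq_ss'; apply: ltnW.
Qed.

Lemma walk_add s m n z :
  walk s (n + m) z = walk (fun i => s (i + m)%N) n (walk s m z).
Proof. by elim: n => [//|n IH]; rewrite addSn /= IH. Qed.

Hypothesis f_incr : forall k x y, x < y -> f k x < f k y.

Lemma walk_le s n z z' : z <= z' -> walk s n z <= walk s n z'.
Proof.
move=> le_zz'; elim: n => [//|n IH] /=.
by move: IH; rewrite le_eqVlt => /orP[/eqP ->//|/f_incr/ltW].
Qed.

Context {admissible : nat -> Prop}.
Hypothesis f_surj : forall k y, exists x, f k x = y.
Hypothesis f_up : forall z, exists j, admissible j /\ z < f j z.

Definition reachable (y z : R) : Prop :=
  exists m k, (forall i, (i < m)%N -> admissible (k i)) /\ z = walk k m y.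

Lemma reachable_step {y z j} :
  admissible j -> reachable y z -> reachable y (f j z).
Proof.
move=> adm_j [m [k [adm_k ->]]].
exists m.+1, (fun i => if i == m then j else k i); split.
  move=> i; rewrite ltnS leq_eqVlt => /orP[/eqP ->|lt_im].
    by rewrite eqxx.
  by rewrite (ltn_eqF lt_im); apply: adm_k.
rewrite /= eqxx; congr (f j _); apply: walk_ext => i lt_im.
by rewrite (ltn_eqF lt_im).
Qed.

(* The reachable points are unbounded above: otherwise at their supremum [s]
   some admissible map pushes up, [s < f j s], and it pushes a reachable point
   close enough to [s] beyond [s]. *)
Lemma reachable_unbounded y x : exists z, reachable y z /\ x <= z.
Proof.
apply: contrapT => no_z.
pose S := reachable y.
have S_lt z : S z -> z < x.
  by move=> Sz; rewrite ltNge; apply/negP => le_xz; apply: no_z; exists z.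
have supS : has_sup S.
  split; first by exists y, 0%N, (fun _ => 0%N).
  by exists x => z /S_lt/ltW.
set s := sup S.
have [j [adm_j s_lt]] := f_up s.
have [z0 fz0] := f_surj j s.
have z0_lt : z0 < s.
  rewrite ltNge; apply/negP; rewrite le_eqVlt => /orP[/eqP eq_sz0|/(f_incr j)].
    by move: s_lt; rewrite {2}eq_sz0 fz0 ltxx.
  by rewrite fz0 => /(lt_trans s_lt); rewrite ltxx.
have gap : 0 < s - z0 by rewrite subr_gt0.
have [z Sz] := sup_adherent gap supS.
rewrite opprB addrC subrK => z0_z.
have := sup_upper_bound supS (reachable_step adm_j Sz).
by rewrite -/s leNgt -{1}fz0 f_incr.
Qed.

End Walk.

(* Divergence to [+oo] of a real sequence, phrased with integer thresholds
   so that the event "the walk escapes" is a countable combination of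
   events on finitely many steps. *)
Definition tends_to_pinfty {R : realType} (u : nat -> R) : Prop :=
  forall M : nat, exists N, forall n, (N <= n)%N -> M%:R < u n.

Lemma tends_to_pinftyP (R : realType) (u : nat -> R) :
  u @ \oo --> +oo <-> tends_to_pinfty u.
Proof.
split=> [/cvgryPgt u_infty M | u_infty].
  by have [N _ HN] := u_infty M%:R; exists N => n; apply: HN.
apply/cvgryPgt => A; have [N HN] := u_infty (Num.truncn `|A|).+1.
exists N => // n /HN; apply: le_lt_trans.
exact: le_trans (ler_norm A) (ltW (truncnS_gt _)).
Qed.

Section ShiftIndependence.
Context {d : measure_display} {T : measurableType d} {R : realType}.
Variables (P : probability T R) (xi : nat -> T -> nat).
Hypothesis iid : iid_seq P xi.

Definition step_law (j : nat) : \bar R := P (xi 0%N @^-1` [set j]).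

Definition cylinder (m : nat) (k : nat -> nat) : set T :=
  \bigcap_(i in `I_m) (xi i @^-1` [set k i]).

Definition shifted (m : nat) (g : (nat -> nat) -> Prop) : set T :=
  [set w | g (fun i => xi (i + m)%N w)].

Lemma measurable_index n j : measurable (xi n @^-1` [set j]).
Proof. exact: iid.1. Qed.

Lemma cylinder0 k : cylinder 0 k = setT.
Proof. by apply/seteqP; split => // w _ i. Qed.

Lemma cylinderS m k : cylinder m.+1 k = cylinder m k `&` xi m @^-1` [set k m].
Proof.
apply/seteqP; split => w.
  by move=> Hw; split => [i /= lt_im|]; apply: Hw => //=; apply: ltnW.
move=> [Hw Hm] i /=; rewrite ltnS leq_eqVlt => /orP[/eqP ->//|]; exact: Hw.
Qed.

Lemma cylinder_ext m k k' :
  (forall i, (i < m)%N -> k i = k' i) -> cylinder m k = cylinder m k'.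
Proof.
by move=> eq_kk'; apply/seteqP; split => w Hw i /= lt_im;
  [rewrite /= -eq_kk' | rewrite /= eq_kk'] => //; apply: Hw.
Qed.

Lemma measurable_cylinder m k : measurable (cylinder m k).
Proof.
elim: m => [|m IH]; first by rewrite cylinder0.
by rewrite cylinderS; apply: measurableI => //; apply: measurable_index.
Qed.

Lemma P_cylinder m k : P (cylinder m k) = (\prod_(i < m) step_law (k i))%E.
Proof. exact: iid.2. Qed.

Lemma P_cylinderS m k :
  P (cylinder m.+1 k) = (P (cylinder m k) * step_law (k m))%E.
Proof. by rewrite !P_cylinder big_ord_recr. Qed.

Lemma P_cylinder_fin m k : P (cylinder m k) \is a fin_num.
Proof. exact/fin_num_measure/measurable_cylinder. Qed.

Lemma P_cylinder_gt0 m k :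
  (forall i, (i < m)%N -> (0 < step_law (k i))%E) -> (0 < P (cylinder m k))%E.
Proof.
elim: m => [|m IH] pos_k; first by rewrite cylinder0 probability_setT.
rewrite P_cylinderS mule_gt0 //; last exact: pos_k.
by apply: IH => i lt_im; apply/pos_k/ltnW.
Qed.

(* This is the form of independence and
   stationarity that the i.i.d. assumption provides. *)
Definition shift_independent (g : (nat -> nat) -> Prop) : Prop :=
  (forall m, measurable (shifted m g)) /\
  (forall m k, P (cylinder m k `&` shifted m g) =
               (P (cylinder m k) * P (shifted 0 g))%E).

Lemma shift_independent_ext g g' :
  (forall s, g s <-> g' s) -> shift_independent g -> shift_independent g'.
Proof.
move=> eq_gg' [meas indep].
have E m : shifted m g = shifted m g' by apply/seteqP; split => w /= /eq_gg'.
by split => [m|m k]; rewrite -!E.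
Qed.

Definition finitary (n : nat) (g : (nat -> nat) -> Prop) : Prop :=
  forall s s', (forall i, (i < n)%N -> s i = s' i) -> g s -> g s'.

Definition scons (j : nat) (s : nat -> nat) : nat -> nat :=
  fun i => if i is i'.+1 then s i' else j.

Lemma shifted_scons m g : shifted m g =
  \bigcup_j (xi m @^-1` [set j] `&` shifted m.+1 (fun s => g (scons j s))).
Proof.
have E w : scons (xi m w) (fun i => xi (i + m.+1)%N w) =
           (fun i => xi (i + m)%N w).
  by apply: funext => -[|i] //=; rewrite addSnnS.
apply/seteqP; split => w.
  by move=> Hw; exists (xi m w) => //; split => //; rewrite /shifted /= E.
by move=> [j _ [/= <-]]; rewrite /shifted /= E.
Qed.

Lemma P_cylinder_index_shifted m k j h : shift_independent h ->
  P (cylinder m k `&` (xi m @^-1` [set j] `&` shifted m.+1 h)) =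
  (P (cylinder m k) * (step_law j * P (shifted 0 h)))%E.
Proof.
move=> indep_h; pose k' i := if i == m then j else k i.
have Ek : cylinder m k = cylinder m k'.
  by apply: cylinder_ext => i lt_im; rewrite /k' (ltn_eqF lt_im).
have Ek' : cylinder m k' `&` xi m @^-1` [set j] = cylinder m.+1 k'.
  by rewrite cylinderS /k' eqxx.
rewrite setIA Ek Ek'.
transitivity (P (cylinder m.+1 k') * P (shifted 0 h))%E; first exact: indep_h.2.
by rewrite P_cylinderS /k' eqxx muleA.
Qed.

Lemma shift_independent_scons g :
  (forall j, shift_independent (fun s => g (scons j s))) ->
  shift_independent g.
Proof.
move=> indep_j; set gj := fun j s => g (scons j s) in indep_j *.
have meas_j m j : measurable (xi m @^-1` [set j] `&` shifted m.+1 (gj j)).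
  by apply: measurableI; [apply: measurable_index | apply: (indep_j j).1].
have meas m : measurable (shifted m g).
  by rewrite shifted_scons; apply: bigcup_measurable => j _.
pose S := (\sum_(j <oo) (step_law j * P (shifted 0 (gj j))))%E.
have key m k : P (cylinder m k `&` shifted m g) = (P (cylinder m k) * S)%E.
  rewrite shifted_scons setI_bigcupr measure_semi_bigcup; first last.
  - rewrite -setI_bigcupr -shifted_scons.
    exact: measurableI (measurable_cylinder _ _) (meas m).
  - by move=> i j _ _ [w [[_ [xi_i _]] [_ [xi_j _]]]]; rewrite -xi_i -xi_j.
  - by move=> j; apply: measurableI (measurable_cylinder _ _) (meas_j m j).
  rewrite -(fineK (P_cylinder_fin m k)) -nneseriesZl; last first.
    by move=> j _; apply: mule_ge0.
  apply: eq_eseriesr => j _; rewrite fineK ?P_cylinder_fin //.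
  exact: P_cylinder_index_shifted.
suff law_g : P (shifted 0 g) = S by split=> // m k; rewrite law_g key.
have := key 0%N (fun _ => 0%N).
by rewrite cylinder0 !setTI probability_setT mul1e.
Qed.

(* Events on finitely many indices are shift-independent: induction on the
   number of indices, conditioning on the first one. *)
Lemma finitary_shift_independent n g : finitary n g -> shift_independent g.
Proof.
elim: n g => [|n IH] g fin_g.
  have const s s' : g s -> g s' by apply: fin_g => i; rewrite ltn0.
  have [g0|ng0] := pselect (g (fun _ => 0%N)).
    have E m : shifted m g = setT.
      by apply/seteqP; split => // w _; apply: const g0.
    by split => [m|m k]; rewrite !E ?setIT ?probability_setT ?mule1.
  have E m : shifted m g = set0 by apply/seteqP; split => // w /const.
  by split => [m|m k]; rewrite !E ?setI0 ?measure0 ?mule0.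
apply: shift_independent_scons => j; apply: IH => s s' eq_ss'.
by apply: fin_g => -[|i] //= lt_in; apply: eq_ss'.
Qed.

(* Shift-independence passes to increasing unions, by continuity of [P]
   from below on both sides of the defining equation. *)
Lemma shift_independent_bigcup (g : nat -> (nat -> nat) -> Prop) :
  (forall N, shift_independent (g N)) -> (forall N s, g N s -> g N.+1 s) ->
  shift_independent (fun s => exists N, g N s).
Proof.
move=> indep_g incr_g.
have E m : shifted m (fun s => exists N, g N s) = \bigcup_N shifted m (g N).
  by apply/seteqP; split => w /= [N gN]; exists N.
have meas m : measurable (\bigcup_N shifted m (g N)).
  by apply: bigcup_measurable => N _; apply: (indep_g N).1.
split => [m|m k]; rewrite !E // setI_bigcupr.
have measI N : measurable (cylinder m k `&` shifted m (g N)).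
  exact: measurableI (measurable_cylinder _ _) ((indep_g N).1 m).
have incr_A : nondecreasing_seq (fun N => shifted 0 (g N)).
  by apply/nondecreasing_seqP => N; apply/subsetPset => w; apply: incr_g.
have incr_cyl : nondecreasing_seq (fun N => cylinder m k `&` shifted m (g N)).
  apply/nondecreasing_seqP => N; apply/subsetPset => w [cyl_w gN_w].
  by split => //; apply: incr_g.
have lim_cyl := nondecreasing_cvg_mu (mu := P) measI
  (bigcup_measurable (fun N _ => measI N)) incr_cyl.
have lim_A := nondecreasing_cvg_mu (mu := P) (fun N => (indep_g N).1 0%N)
  (meas 0%N) incr_A.
rewrite -(cvg_lim (@ereal_hausdorff R) lim_cyl).
rewrite -(cvg_lim (@ereal_hausdorff R) (cvgeZl (P_cylinder_fin m k) lim_A)).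
suff -> : P \o (fun N => cylinder m k `&` shifted m (g N)) =
          (fun N => P (cylinder m k) * P (shifted 0 (g N)))%E by [].
by apply: funext => N; exact: (indep_g N).2.
Qed.

(* Shift-independence passes to decreasing intersections, by continuity of
   the finite measure [P] from above. *)
Lemma shift_independent_bigcap (g : nat -> (nat -> nat) -> Prop) :
  (forall N, shift_independent (g N)) -> (forall N s, g N.+1 s -> g N s) ->
  shift_independent (fun s => forall N, g N s).
Proof.
move=> indep_g decr_g.
have E m : shifted m (fun s => forall N, g N s) = \bigcap_N shifted m (g N).
  by apply/seteqP; split => w /= gw N; [move=> _|]; apply: gw.
have meas m : measurable (\bigcap_N shifted m (g N)).
  by apply: bigcap_measurableType => N _; apply: (indep_g N).1.
split => [m|m k]; rewrite !E // -bigcapIr; last by exists 0%N.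
have measI N : measurable (cylinder m k `&` shifted m (g N)).
  exact: measurableI (measurable_cylinder _ _) ((indep_g N).1 m).
have fin A : measurable A -> (P A < +oo)%E.
  by move=> mA; exact: le_lt_trans (probability_le1 P mA) (ltry _).
have decr_A : nonincreasing_seq (fun N => shifted 0 (g N)).
  by apply/nonincreasing_seqP => N; apply/subsetPset => w; apply: decr_g.
have decr_cyl : nonincreasing_seq (fun N => cylinder m k `&` shifted m (g N)).
  apply/nonincreasing_seqP => N; apply/subsetPset => w [cyl_w gN_w].
  by split => //; apply: decr_g.
have lim_cyl := nonincreasing_cvg_mu (mu := P) (fin _ (measI 0%N)) measI
  (bigcap_measurableType (fun N _ => measI N)) decr_cyl.
have lim_A := nonincreasing_cvg_mu (mu := P) (fin _ ((indep_g 0%N).1 0%N))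
  (fun N => (indep_g N).1 0%N) (meas 0%N) decr_A.
rewrite -(cvg_lim (@ereal_hausdorff R) lim_cyl).
rewrite -(cvg_lim (@ereal_hausdorff R) (cvgeZl (P_cylinder_fin m k) lim_A)).
suff -> : P \o (fun N => cylinder m k `&` shifted m (g N)) =
          (fun N => P (cylinder m k) * P (shifted 0 (g N)))%E by [].
by apply: funext => N; exact: (indep_g N).2.
Qed.

Variable f : nat -> R -> R.

Definition escapes (z : R) (s : nat -> nat) : Prop :=
  tends_to_pinfty (fun n => walk f s n z).

Lemma phi_plus_escapes x : phi_plus P f xi x = P (shifted 0 (escapes x)).
Proof.
have E w : (fun n => Fwalk f xi n w x) =
           (fun n => walk f (fun i => xi (i + 0)%N w) n x).
  apply: funext => n; rewrite Fwalk_walk.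
  by apply: walk_ext => i _; rewrite addn0.
by congr (P _); apply/seteqP; split => w /=; rewrite E => /tends_to_pinftyP.
Qed.

(* Escape is [forall M, exists N, forall N', above M N N'], a countable
   intersection of increasing unions of decreasing intersections of events
   on finitely many indices, hence shift-independent. *)
Lemma shift_independent_escapes z : shift_independent (escapes z).
Proof.
pose above M N N' s := forall n, (N <= n <= N + N')%N -> M%:R < walk f s n z.
have fin_above M N N' : shift_independent (above M N N').
  apply: (@finitary_shift_independent (N + N').+1) => s s' eq_ss' Hs n Hn.
  rewrite -(@walk_ext _ f s s' n z); first exact: Hs.
  move=> i lt_in; apply: eq_ss'; rewrite ltnS; case/andP: Hn => _.
  by move=> le_n; apply: ltnW (leq_trans lt_in le_n).
have after M N : shift_independent (fun s => forall N', above M N N' s).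
  apply: shift_independent_bigcap => // N' s Hs n /andP[le_Nn le_n].
  by apply: Hs; rewrite le_Nn addnS leqW.
have eventually M :
    shift_independent (fun s => exists N, forall N', above M N N' s).
  apply: shift_independent_bigcup => // N s Hs N' n /andP[lt_Nn le_n].
  by apply: (Hs N'.+1); rewrite (ltnW lt_Nn) addnS -addSn.
have all_M :
    shift_independent (fun s => forall M, exists N, forall N', above M N N' s).
  apply: shift_independent_bigcap => // M s [N HN]; exists N => N' n Hn.
  by apply: lt_trans (HN N' n Hn); rewrite ltr_nat.
apply: shift_independent_ext all_M => s; split => esc M; have [N HN] := esc M.
  by exists N => n le_Nn; apply: (HN (n - N)%N); rewrite subnKC // le_Nn leqnn.
by exists N => N' n /andP[le_Nn _]; apply: HN.
Qed.

Hypothesis f_incr : forall k x y, x < y -> f k x < f k y.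
Hypothesis f_surj : forall k y, exists x, f k x = y.
Hypothesis f_up : forall z, exists j, (0 < step_law j)%E /\ z < f j z.

Lemma escapes_le x x' s : x <= x' -> escapes x s -> escapes x' s.
Proof.
move=> le_xx' esc M; have [N HN] := esc M; exists N => n /HN lt_M.
by apply: lt_le_trans lt_M _; apply: walk_le.
Qed.

Lemma cylinder_escapes m k y :
  cylinder m k `&` shifted m (escapes (walk f k m y)) `<=`
  shifted 0 (escapes y).
Proof.
move=> w [cyl_w esc_w] M; have [N HN] := esc_w M; exists (N + m)%N => n le_n.
have le_mn : (m <= n)%N by apply: leq_trans (leq_addl N m) le_n.
rewrite (@walk_ext _ _ _ (fun i => xi i w)) => [|i _]; last by rewrite addn0.
rewrite -(subnK le_mn) walk_add (@walk_ext _ _ (fun i => xi i w) k).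
  by apply: HN; rewrite leq_subRL // addnC.
by move=> i lt_im; apply: cyl_w.
Qed.

(* Positivity of the escape probability propagates from [x] to any [y]:
   with positive probability the walk from [y] first reaches some
   [z >= x] (by [reachable_unbounded]), and, independently, then escapes
   with probability at least that of escaping from [x]. *)
Theorem phi_plus_pos_everywhere :
  (exists x, (0 < phi_plus P f xi x)%E) -> forall y, (0 < phi_plus P f xi y)%E.
Proof.
move=> [x]; rewrite phi_plus_escapes => pos_x y; rewrite phi_plus_escapes.
have [_ [[m [k [pos_k ->]]] le_xz]] :=
  reachable_unbounded _ f_incr f_surj f_up y x.
have mono A B : measurable A -> measurable B -> A `<=` B -> (P A <= P B)%E.
  by move=> mA mB; apply: le_measure; rewrite inE.
have [meas_esc indep_esc] := shift_independent_escapes (walk f k m y).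
apply: (lt_le_trans _ (mono _ _ _ _ (cylinder_escapes m k y))); first last.
- exact: (shift_independent_escapes y).1.
- exact: measurableI (measurable_cylinder _ _) (meas_esc m).
rewrite indep_esc mule_gt0 ?P_cylinder_gt0 //.
apply: lt_le_trans pos_x (mono _ _ _ _ _) => [||w]; last exact: escapes_le.
- exact: (shift_independent_escapes x).1.
- exact: meas_esc.
Qed.

End ShiftIndependence.

Section Shiftability.
Context {d : measure_display} {T : measurableType d} {R : realType}.
Variables (P : probability T R) (f : nat -> R -> R) (xi : nat -> T -> nat).
Hypothesis iid : iid_seq P xi.

(* A map charged by the step law is [f j] for an index [j] of positive
   probability (the event [g_1 = h] is a countable union of index events). *)
Lemma mu_atom_index {h} :
  (0 < mu_atom P f xi h)%E -> exists j, (0 < step_law P xi j)%E /\ f j = h.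
Proof.
move=> pos_h; apply: contrapT => no_j.
have null j : f j = h -> step_law P xi j = 0%E.
  move=> fj; apply/eqP; rewrite eq_le measure_ge0 andbT leNgt.
  apply/negP => pos_j.
  by apply: no_j; exists j.
have E : [set w | f (xi 0%N w) = h] =
         \bigcup_(j in [set j | f j = h]) (xi 0%N @^-1` [set j]).
  apply/seteqP; split => [w /= fw|w [j /= <- ->]] //.
  by exists (xi 0%N w).
move: pos_h; rewrite /mu_atom E measure_bigcup.
- by rewrite eseries0 ?ltxx // => j _; rewrite inE; apply: null.
- by move=> j _; apply: iid.1.
- by move=> i j _ _ [w [/= <- <-]].
Qed.

Hypothesis shift : shiftable P f xi.

Lemma shiftable_up z : exists j, (0 < step_law P xi j)%E /\ z < f j z.
Proof.
have [h [_ [pos_h [_ /andP[_ lt_zh]]]]] := shift z.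
have [j [pos_j fj]] := mu_atom_index pos_h.
by exists j; rewrite fj.
Qed.

Lemma shiftable_down z : exists j, (0 < step_law P xi j)%E /\ f j z < z.
Proof.
have [_ [g [_ [pos_g /andP[lt_gz _]]]]] := shift z.
have [j [pos_j fj]] := mu_atom_index pos_g.
by exists j; rewrite fj.
Qed.

End Shiftability.

(* Conjugation by [z |-> -z]: it exchanges escape to [-oo] and to [+oo]
   and preserves monotonicity and surjectivity of the maps. *)
Definition mirror {R : realType} (f : nat -> R -> R) : nat -> R -> R :=
  fun k z => - f k (- z).

Lemma Fwalk_mirror (R : realType) (T : Type) (f : nat -> R -> R)
    (xi : nat -> T -> nat) n w x :
  Fwalk (mirror f) xi n w x = - Fwalk f xi n w (- x).
Proof.
by elim: n => [|n IH] /=; [rewrite opprK | rewrite IH /mirror opprK].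
Qed.

Lemma phi_minus_mirror (d : measure_display) (T : measurableType d)
    (R : realType) (P : probability T R) f (xi : nat -> T -> nat) x :
  phi_minus P f xi x = phi_plus P (mirror f) xi (- x).
Proof.
have E w : (fun n => Fwalk (mirror f) xi n w (- x)) =
           - (fun n => Fwalk f xi n w x).
  by apply: funext => n /=; rewrite Fwalk_mirror opprK.
by congr (P _); apply/seteqP; split => w /=; rewrite E; move/cvgNry.
Qed.

(* The phi_- half is the phi_+ half for the mirrored maps, which move every
   point up because the original maps move every point down. *)
Theorem lemma2 (d : measure_display) (T : measurableType d) (R : realType)
  (P : probability T R) (f : nat -> R -> R) (xi : nat -> T -> nat) :
  (forall k, homeo_plus (f k)) ->
  iid_seq P xi ->
  shiftable P f xi ->
  ((exists x : R, (0 < phi_plus P f xi x)%E) ->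
     forall y : R, (0 < phi_plus P f xi y)%E) /\
  ((exists x : R, (0 < phi_minus P f xi x)%E) ->
     forall y : R, (0 < phi_minus P f xi y)%E).
Proof.
move=> homeo iid shift.
have f_incr k x y : x < y -> f k x < f k y.
  by have [_ [incr _]] := homeo k; apply: incr.
have f_surj k y : exists x, f k x = y by have [_ [_ surj]] := homeo k.
split.
  exact: (phi_plus_pos_everywhere _ _ iid _ f_incr f_surj
           (shiftable_up _ _ _ iid shift)).
have mirror_incr k x y : x < y -> mirror f k x < mirror f k y.
  by move=> lt_xy; rewrite ltrN2 f_incr // ltrN2.
have mirror_surj k y : exists x, mirror f k x = y.
  have [x fx] := f_surj k (- y).
  by exists (- x); rewrite /mirror opprK fx opprK.
have mirror_up z : exists j, (0 < step_law P xi j)%E /\ z < mirror f j z.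
  have [j [pos_j lt_fz]] := shiftable_down _ _ _ iid shift (- z).
  by exists j; rewrite /mirror ltrNr.
move=> [x pos_x] y; rewrite phi_minus_mirror.
apply: (phi_plus_pos_everywhere _ _ iid _ mirror_incr mirror_surj mirror_up).
by exists (- x); rewrite -phi_minus_mirror.
Qed.
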